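(* Let $k\ge 3$ and let $n$ be sufficiently large. Define $f(n,k)=\frac{n}{k}$ if $n$ is even and $f(n,k)=\frac{n-1}{2k}$ if $n$ is odd. If $n$ is even, then $f(n,k)\cdot\mathsf{m}(k-1) \le N(BM,k,n) \le N(GM,k,n)$. If $n$ is odd, then $f(n,k)\cdot\mathsf{m}(k-1) \le N(GM,k,n)$ and $f(n,k)\cdot \mathsf{m}(k-2) \le N(BM,k,n)$.
   Context: We are given $n$ balls, the set $[n]=\{1,\dots,n\}$, each colored with one of two colors by an unknown coloring. A ball $i$ is a majority ball if more than $n/2$ balls have the same color as $i$. A query is a subset $Q\subseteq[n]$ with $|Q|=k$. In the General (Yes-No) Model (GM), the answer to a query $Q$ is YES if $Q$ contains two balls of different colors and NO otherwise. In Borzyszkowski's Model (BM), the answer is YES together with a pair of balls of $Q$ having different colors (the pair may be any such pair) if such a pair exists, and NO if all balls of $Q$ have the same color. A non-adaptive strategy is a family of queries $Q_1,\dots,Q_q$ fixed in advance. It succeeds if for every coloring and every admissible sequence of answers, the answers determine the outcome: either every coloring consistent with the answers has no majority ball, or there is a ball that is a majority ball in every coloring consistent with the answers. $N(GM,k,n)$ and $N(BM,k,n)$ denote the minimum number of queries in a successful non-adaptive strategy in the respective model. A hypergraph has Property B if its vertices can be 2-colored with no monochromatic edge. For $k\ge 1$, $\mathsf{m}(k)$ is the minimum number of edges of a $k$-uniform hypergraph that does not have Property B. *)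

From mathcomp Require Import all_boot all_order all_algebra.
Set Implicit Arguments. Unset Strict Implicit. Unset Printing Implicit Defensive.
Import Order.TTheory GRing.Theory Num.Theory.

Definition coloring (n : nat) := {ffun 'I_n -> bool}.

Definition majority (n : nat) (c : coloring n) (i : 'I_n) : Prop :=
  n < 2 * #|[set j | c j == c i]|.

Definition determined (n : nat) (S : coloring n -> Prop) : Prop :=
  (forall c, S c -> forall i, ~ majority c i) \/
  (exists i, forall c, S c -> majority c i).

Definition bichromatic (n : nat) (c : coloring n) (Q : {set 'I_n}) : bool :=
  [exists x in Q, exists y in Q, c x != c y].

Definition admGM (n : nat) (c : coloring n) (Q : {set 'I_n}) (a : bool) : bool :=
  a == bichromatic c Q.

(* BM: NO (None) if Q monochromatic; YES with a pair Some (x,y) of balls of Q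
   with different colors (any such pair). *)
Definition admBM (n : nat) (c : coloring n) (Q : {set 'I_n})
    (a : option ('I_n * 'I_n)) : bool :=
  match a with
  | None => ~~ bichromatic c Q
  | Some (x, y) => [&& x \in Q, y \in Q & c x != c y]
  end.

(* Generic success of a non-adaptive strategy Qs of k-subsets,
   for a model given by its answer type A and admissibility relation adm. *)
Definition successful {A : Type} {n : nat} (k : nat)
    (adm : coloring n -> {set 'I_n} -> A -> bool) (Qs : seq {set 'I_n}) : Prop :=
  (forall Q, Q \in Qs -> #|Q| = k) /\
  forall (c : coloring n) (ans : seq A), all2 (adm c) Qs ans ->
    determined (fun c' => all2 (adm c') Qs ans).

Definition successful_GM (n k : nat) := successful k (@admGM n).
Definition successful_BM (n k : nat) := successful k (@admBM n).

Definition is_min_queries {n : nat} (succ : seq {set 'I_n} -> Prop) (q : nat) : Prop :=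
  (exists Qs, succ Qs /\ size Qs = q) /\
  (forall Qs, succ Qs -> q <= size Qs).

Definition is_N_GM (k n q : nat) : Prop := is_min_queries (@successful_GM n k) q.
Definition is_N_BM (k n q : nat) : Prop := is_min_queries (@successful_BM n k) q.

Definition propertyB (v : nat) (E : {set {set 'I_v}}) : Prop :=
  exists col : 'I_v -> bool,
    forall e, e \in E -> ~ (forall x y, x \in e -> y \in e -> col x = col y).

Definition uniform (v k : nat) (E : {set {set 'I_v}}) : Prop :=
  forall e, e \in E -> #|e| = k.

Definition is_m (k q : nat) : Prop :=
  (exists v (E : {set {set 'I_v}}), uniform k E /\ ~ propertyB E /\ #|E| = q) /\
  (forall v (E : {set {set 'I_v}}), uniform k E -> ~ propertyB E -> q <= #|E|).

Definition f (n k : nat) : rat :=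
  if ~~ odd n then (n%:R / k%:R)%R else ((n%:R - 1) / (2 * k%:R))%R.

From mathcomp Require Import all_boot all_order all_algebra.
From mathcomp Require Import zify.
From Stdlib Require Import Classical.

Set Implicit Arguments. Unset Strict Implicit. Unset Printing Implicit Defensive.
Import GRing.Theory Num.Theory.

(* Suppose a strategy asks too few queries.  Double counting yields a ball x
   (for n odd, two balls x and y) lying in fewer than m queries, where m is
   m(k-1), or m(k-2) for BM with n odd.  Deleting x (and y) from these queries
   leaves a hypergraph with fewer than m edges, hence with Property B; extend a
   proper colouring of it to all balls so that the colour classes have sizes
   n/2, respectively (n+1)/2 for the class of x and y.  Every query through x
   then remains bichromatic without x, so flipping the colour of x changes no
   GM answer, and the BM answers can be chosen to reveal only pairs avoiding x
   and y.  For n even the flip turns a colouring without majority into one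
   where x is a majority ball.  For n odd, x is the only ball that is a
   majority ball both before and after flipping x, and likewise for y.  Either
   way the answers do not determine the outcome. *)

Section Colorings.
Variable n : nat.
Implicit Types (c : coloring n) (x y : 'I_n).

Definition color_class c b := [set j | c j == b].

Definition flip c x : coloring n := [ffun j => if j == x then ~~ c j else c j].

Lemma flipE c x j : flip c x j = if j == x then ~~ c j else c j.
Proof. exact: ffunE. Qed.

Lemma card_color_classN c b : #|color_class c b| + #|color_class c (~~ b)| = n.
Proof.
have -> : color_class c (~~ b) = ~: color_class c b.
  by apply/setP => j; rewrite !inE; case: (c j); case: b.
by rewrite cardsC card_ord.
Qed.

Lemma card_color_class_flip c x b :
  #|color_class (flip c x) b| =
    if c x == b then #|color_class c b|.-1 else #|color_class c b|.+1.
Proof.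
case: eqP => [cxb|/eqP cxNb].
  have -> : color_class (flip c x) b = color_class c b :\ x.
    apply/setP => j; rewrite !inE flipE; case: (j =P x) => [->|_] //=.
    by rewrite cxb; case: b {cxb}.
  by rewrite (cardsD1 x (color_class c b)) inE cxb eqxx.
have -> : color_class (flip c x) b = x |: color_class c b.
  apply/setP => j; rewrite !inE flipE; case: (j =P x) => [->|_] //=.
  by move: cxNb; case: (c x); case: b.
by rewrite cardsU1 inE (negbTE cxNb).
Qed.

Lemma card_color_class_even c b :
  ~~ odd n -> #|color_class c true| = n./2 -> #|color_class c b| = n./2.
Proof.
move=> ev ht; have := odd_double_half n; rewrite (negbTE ev) add0n.
have := card_color_classN c true; rewrite ht.
by case: b => //=; lia.
Qed.

Lemma not_determined_even (S : coloring n -> Prop) c x :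
  ~~ odd n -> #|color_class c true| = n./2 -> S c -> S (flip c x) -> ~ determined S.
Proof.
move=> ev ht Sc Sx; have := odd_double_half n; rewrite (negbTE ev) add0n => hn.
case=> [nomaj | [i maj]].
  apply: (nomaj _ Sx x); rewrite /majority -/(color_class _ _).
  rewrite card_color_class_flip flipE eqxx.
  by case: eqP => [|_]; [case: (c x) | rewrite card_color_class_even //; lia].
move: (maj c Sc); rewrite /majority -/(color_class _ _) card_color_class_even //; lia.
Qed.

Lemma majority_flip_odd c x i :
  odd n -> #|color_class c (c x)| = n./2.+1 ->
  majority c i -> majority (flip c x) i -> i = x.
Proof.
move=> od hx; have := odd_double_half n; rewrite od => hn.
rewrite /majority -!/(color_class _ _) => maj_c maj_flip.
have ci : c i = c x.
  apply/eqP; apply: contraTT maj_c => /negPf ci.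
  have -> : c i = ~~ c x by case: (c x) ci; case: (c i).
  have := card_color_classN c (c x); rewrite hx; lia.
apply/eqP; apply: contraTT maj_flip => ix.
rewrite flipE (negbTE ix) ci card_color_class_flip eqxx hx; lia.
Qed.

Lemma not_determined_odd (S : coloring n -> Prop) c x y :
  odd n -> x != y -> #|color_class c (c x)| = n./2.+1 -> c y = c x ->
  S c -> S (flip c x) -> S (flip c y) -> ~ determined S.
Proof.
move=> od xy hx cy Sc Sx Sy; have := odd_double_half n; rewrite od => hn.
case=> [nomaj | [i maj]].
  by apply: (nomaj _ Sc x); rewrite /majority -/(color_class _ _) hx; lia.
have hy : #|color_class c (c y)| = n./2.+1 by rewrite cy.
have ix := majority_flip_odd od hx (maj c Sc) (maj _ Sx).
have iy := majority_flip_odd od hy (maj c Sc) (maj _ Sy).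
by move: xy; rewrite -ix -iy eqxx.
Qed.

End Colorings.

Section Extension.
Variable n : nat.
Implicit Types (A U : {set 'I_n}).

Definition take_set m A : {set 'I_n} := [set:: take m (enum A)].

Lemma take_set_sub m A : take_set m A \subset A.
Proof. by apply/subsetP => j; rewrite inE => /mem_take; rewrite mem_enum. Qed.

Lemma card_take_set m A : m <= #|A| -> #|take_set m A| = m.
Proof.
move=> hm; rewrite cardsE (card_uniqP _) ?take_uniq ?enum_uniq //.
by rewrite size_takel // -cardE.
Qed.

Lemma exists_extension U (c0 : 'I_n -> bool) t :
  #|U| <= t <= n - #|U| ->
  exists2 c : coloring n, {in U, c =1 c0} & #|color_class c true| = t.
Proof.
move=> /andP[hUt htU].
set T := [set u in U | c0 u]; set R := take_set (t - #|T|) (~: U).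
have sTU : T \subset U by apply/subsetP => u; rewrite inE => /andP[].
have sRU : R \subset ~: U by apply: take_set_sub.
have cardR : #|R| = t - #|T|.
  apply: card_take_set; have := cardsC U; have := subset_leq_card sTU.
  rewrite card_ord; lia.
exists [ffun j => j \in T :|: R].
  move=> u uU; rewrite ffunE in_setU inE uU /=.
  by case: (c0 u) => //=; apply: contraTF uU => /(subsetP sRU); rewrite inE.
have -> : color_class [ffun j => j \in T :|: R] true = T :|: R.
  by apply/setP => j; rewrite inE ffunE eqb_id.
have disTR : [disjoint T & R].
  by apply: disjointWl sTU _; rewrite disjoint_sym disjoints_subset.
rewrite cardsU disjoint_setI0 // cards0 subn0 cardR subnKC //.
exact: leq_trans (subset_leq_card sTU) hUt.
Qed.

Lemma exists_extension_odd U (c0 : 'I_n -> bool) x :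
  odd n -> #|U| <= n./2 -> x \in U ->
  exists2 c : coloring n, {in U, c =1 c0} & #|color_class c (c x)| = n./2.+1.
Proof.
move=> od hU xU; have := odd_double_half n; rewrite od => hn.
pose t := if c0 x then n./2.+1 else n./2.
have [c cU ht] : exists2 c : coloring n, {in U, c =1 c0} & #|color_class c true| = t.
  by apply: exists_extension; rewrite /t; case: (c0 x); apply/andP; split; lia.
exists c => //; rewrite (cU x xU); move: ht; rewrite /t; case: (c0 x) => // ht.
have := card_color_classN c true; rewrite ht /=; lia.
Qed.

End Extension.

Section Answers.
Variable n : nat.
Implicit Types (c : coloring n) (x : 'I_n) (A B Q X : {set 'I_n}).

Lemma eq_in_bichromatic c1 c2 Q :
  {in Q, c1 =1 c2} -> bichromatic c1 Q = bichromatic c2 Q.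
Proof.
move=> h; apply: eq_existsb => u; case uQ: (u \in Q) => //=.
by apply: eq_existsb => v; case vQ: (v \in Q); rewrite //= !h.
Qed.

Lemma bichromaticS c A B : A \subset B -> bichromatic c A -> bichromatic c B.
Proof.
move=> /subsetP sAB /existsP[u /andP[uA /existsP[v /andP[vA cuv]]]].
by apply/existsP; exists u; rewrite sAB //; apply/existsP; exists v; rewrite sAB.
Qed.

Lemma bichromatic_imset c (col : 'I_n -> bool) (g : 'I_n -> 'I_n) A :
  {in A, forall u, c u = col (g u)} ->
  ~ (forall u v, u \in g @: A -> v \in g @: A -> col u = col v) ->
  bichromatic c A.
Proof.
move=> cA; apply: contra_notT => /existsPn monoA u v /imsetP[a aA ->] /imsetP[b bA ->].
move: (monoA a); rewrite aA /= => /existsPn /(_ b); rewrite bA negbK => /eqP.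
by rewrite !cA.
Qed.

Lemma bichromatic_flip c x Q :
  (x \in Q -> bichromatic c (Q :\ x)) -> bichromatic (flip c x) Q = bichromatic c Q.
Proof.
move=> bQx; case xQ: (x \in Q); last first.
  by apply: eq_in_bichromatic => u uQ; rewrite flipE; case: eqP => // ux; rewrite ux xQ in uQ.
have {}bQx := bQx xQ.
have bQx' : bichromatic (flip c x) (Q :\ x).
  by rewrite (eq_in_bichromatic (c2 := c)) // => u; rewrite !inE flipE => /andP[/negbTE ->].
by rewrite !(bichromaticS (subsetDl Q [set x])).
Qed.

Definition answer_avoiding c X Q : option ('I_n * 'I_n) :=
  if [pick p | [&& p.1 \in Q :\: X, p.2 \in Q :\: X & c p.1 != c p.2]] is Some p
  then Some p
  else [pick p | [&& p.1 \in Q, p.2 \in Q & c p.1 != c p.2]].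

Lemma admBM_answer_avoiding c X Q : admBM c Q (answer_avoiding c X Q).
Proof.
rewrite /answer_avoiding; case: pickP => [[u v] /=|_].
  by rewrite !inE => /and3P[/andP[_ ->] /andP[_ ->] ->].
case: pickP => [[u v] //|none] /=.
apply/existsP => -[u /andP[uQ /existsP[v /andP[vQ cuv]]]].
by move: (none (u, v)); rewrite /= uQ vQ cuv.
Qed.

Lemma admBM_flip_answer_avoiding c X x Q :
  x \in X -> (x \in Q -> bichromatic c (Q :\: X)) ->
  admBM (flip c x) Q (answer_avoiding c X Q).
Proof.
move=> xX bQX; case xQ: (x \in Q).
  move: (bQX xQ) => /existsP[u /andP[uQX /existsP[v /andP[vQX cuv]]]].
  rewrite /answer_avoiding; case: pickP => [[a b] /=|none]; last first.
    by move: (none (u, v)); rewrite /= uQX vQX cuv.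
  rewrite !inE => /and3P[/andP[aX aQ] /andP[bX bQ] cab].
  have notx d : d \notin X -> (d == x) = false by move=> dX; apply: contraNF dX => /eqP->.
  by rewrite aQ bQ !flipE (notx a aX) (notx b bX).
have cQ : {in Q, flip c x =1 c}.
  by move=> u uQ; rewrite flipE; case: eqP => // ux; rewrite ux xQ in uQ.
case: (answer_avoiding c X Q) (admBM_answer_avoiding c X Q) => [[u v]|] /=.
  by case/and3P=> uQ vQ; rewrite uQ vQ !cQ.
by rewrite (eq_in_bichromatic cQ).
Qed.

End Answers.

Lemma all2_map_diag (A B : Type) (r : A -> B -> bool) (g : A -> B) s :
  all2 r s (map g s) = all (fun a => r a (g a)) s.
Proof. by elim: s => //= a s ->. Qed.

Lemma successful_GM_BM n k (Qs : seq {set 'I_n}) :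
  successful_GM k Qs -> successful_BM k Qs.
Proof.
case=> sizeQs detGM; split => // c ans admc.
have toGM c' : all2 (admBM c') Qs ans -> all2 (admGM c') Qs (map isSome ans).
  elim: Qs ans {sizeQs detGM admc} => [|Q Qs IH] [|a ans] //= /andP[aQ /IH ->].
  rewrite andbT /admGM; case: a aQ => [[u v] /and3P[uQ vQ cuv]|/negbTE ->] //=.
  by apply/eqP/esym/existsP; exists u; rewrite uQ; apply/existsP; exists v; rewrite vQ.
case: (detGM c _ (toGM c admc)) => [nomaj|[i maj]]; [left|right].
  by move=> c' /toGM; apply: nomaj.
by exists i => c' /toGM; apply: maj.
Qed.

Section Degrees.
Variables (n k : nat) (Qs : seq {set 'I_n}).
Hypothesis card_Qs : forall Q, Q \in Qs -> #|Q| = k.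

Definition degree (x : 'I_n) := count (fun Q : {set 'I_n} => x \in Q) Qs.

Lemma sum_degree : \sum_x degree x = k * size Qs.
Proof.
rewrite /degree; under eq_bigr do rewrite -sum1_count big_mkcond /=.
rewrite exchange_big big_seq (eq_bigr (fun=> k)) => [|Q QQs]; last first.
  by rewrite -big_mkcond sum1_card card_Qs.
by rewrite -big_seq big_const_seq count_predT iter_addn_0 mulnC.
Qed.

Lemma exists_low_degree m : k * size Qs < n * m -> exists x, degree x < m.
Proof.
move=> hlt; have n_gt0 : 0 < n by nia.
have [x _ xmin] := arg_minnP degree (erefl (predT (Ordinal n_gt0))).
exists x; rewrite -(ltn_pmul2l n_gt0); apply: leq_ltn_trans hlt.
rewrite -sum_degree -{1}(card_ord n) -sum_nat_const.
by apply: leq_sum => j _; apply: xmin.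
Qed.

Lemma exists_two_low_degree m :
  2 * (k * size Qs) < n.-1 * m -> exists x y, x != y /\ degree x + degree y < m.
Proof.
move=> hlt; have n_gt1 : 1 < n by nia.
have n_gt0 : 0 < n by lia.
have [x _ xmin] := arg_minnP degree (erefl (predT (Ordinal n_gt0))).
have /card_gt0P[y0 y0x] : 0 < #|predC1 x| by rewrite cardC1 card_ord; lia.
have [y yx ymin] := arg_minnP degree y0x.
exists x, y; split; first by rewrite eq_sym.
have := sum_degree; rewrite (bigD1 x) //=.
have : \sum_(j | j != x) degree y <= \sum_(j | j != x) degree j.
  by apply: leq_sum => j; apply: ymin.
rewrite sum_nat_const cardC1 card_ord.
set rest := \sum_(j | j != x) degree j => rest_ge sum_eq.
have xy : (n - 2) * degree x <= (n - 2) * degree y by apply/leq_mul/xmin.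
have le2ks : n * (degree x + degree y) <= 2 * (k * size Qs) by nia.
rewrite -(ltn_pmul2l n_gt0); apply: leq_ltn_trans le2ks (leq_trans hlt _).
by rewrite leq_mul2r leq_pred orbT.
Qed.

Lemma count_or_degree x y :
  count (fun Q : {set 'I_n} => (x \in Q) || (y \in Q)) Qs <= degree x + degree y.
Proof. by rewrite /degree -count_predUI leq_addr. Qed.

End Degrees.

Lemma card_bigcup_seq_le n k (Fs : seq {set 'I_n}) :
  (forall Q, Q \in Fs -> #|Q| <= k) -> #|\bigcup_(Q <- Fs) Q| <= k * size Fs.
Proof.
elim: Fs => [|Q Fs IH] cardF; first by rewrite big_nil cards0.
rewrite big_cons mulnS; apply: leq_trans (leq_card_setU _ _) (leq_add _ _).
  by apply: cardF; rewrite mem_head.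
by apply: IH => P PF; apply: cardF; rewrite in_cons PF orbT.
Qed.

Lemma sub_bigcup_seq n (Fs : seq {set 'I_n}) Q : Q \in Fs -> Q \subset \bigcup_(P <- Fs) P.
Proof. by move=> QF; rewrite bigcup_seq; apply: bigcup_sup. Qed.

Lemma propertyB_of_lt_m j m v (E : {set {set 'I_v}}) :
  is_m j m -> uniform j E -> #|E| < m -> propertyB E.
Proof. by move=> [_ min_m] unifE ltE; apply: NNPP => /(min_m _ _ unifE); lia. Qed.

Lemma card_set_seq_le (T : finType) (s : seq T) : #|[set:: s]| <= size s.
Proof. by rewrite cardsE card_size. Qed.

Lemma bichromatic_agree n (c : coloring n) (col : 'I_n -> bool) (A : {set 'I_n}) :
  {in A, c =1 col} -> ~ (forall u v, u \in A -> v \in A -> col u = col v) ->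
  bichromatic c A.
Proof.
by move=> cA monoA; apply: (bichromatic_imset (g := fun u => u)) cA _; rewrite imset_id.
Qed.

Definition merge n (x y : 'I_n) (j : 'I_n) := if j == y then x else j.

Lemma merge_inj_in n (x y : 'I_n) (A : {set 'I_n}) :
  (x \notin A) || (y \notin A) -> {in A &, injective (merge x y)}.
Proof.
rewrite /merge => xyA u v uA vA.
case: (u =P y) => [uy|_]; case: (v =P y) => [vy|_] // eq; move: xyA.
- by rewrite uy vy.
- by rewrite eq -uy uA vA.
- by rewrite -eq -vy uA vA.
Qed.

Section LowDegreeColorings.
Variables (n k m : nat) (Qs : seq {set 'I_n}) (c0 : 'I_n -> bool).
Hypothesis card_Qs : forall Q, Q \in Qs -> #|Q| = k.

Lemma exists_balanced_coloring x :
  ~~ odd n -> 2 * (k * m) <= n -> degree Qs x < m ->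
  exists2 c : coloring n, #|color_class c true| = n./2 &
    forall Q, Q \in Qs -> x \in Q -> {in Q, c =1 c0}.
Proof.
move=> ev hn degx; set U := \bigcup_(Q <- [seq Q : {set 'I_n} <- Qs | x \in Q]) Q.
have cardU : #|U| <= k * degree Qs x.
  rewrite /degree -size_filter; apply: card_bigcup_seq_le => Q.
  by rewrite mem_filter => /andP[_ /card_Qs ->].
have [c cU ht] : exists2 c : coloring n, {in U, c =1 c0} & #|color_class c true| = n./2.
  apply: exists_extension; have := odd_double_half n; rewrite (negbTE ev) add0n.
  have : k * degree Qs x <= k * m by rewrite leq_mul2l ltnW ?orbT.
  lia.
exists c => // Q QQs xQ u uQ; apply: cU; apply: subsetP uQ.
by apply: sub_bigcup_seq; rewrite mem_filter xQ.
Qed.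

Lemma exists_odd_coloring x y :
  odd n -> 5 + 2 * (k * m) <= n -> degree Qs x + degree Qs y < m -> c0 y = c0 x ->
  exists c : coloring n, [/\ #|color_class c (c x)| = n./2.+1, c y = c x &
    forall Q, Q \in Qs -> (x \in Q) || (y \in Q) -> {in Q, c =1 c0}].
Proof.
move=> od hn degxy c0yx.
set U := x |: (y |: \bigcup_(Q <- [seq Q : {set 'I_n} <- Qs | (x \in Q) || (y \in Q)]) Q).
have cardU : #|U| <= (k * (degree Qs x + degree Qs y)).+2.
  apply: leq_trans (leq_card_setU _ _) _; rewrite cards1 add1n ltnS.
  apply: leq_trans (leq_card_setU _ _) _; rewrite cards1 add1n ltnS.
  apply: leq_trans (card_bigcup_seq_le (k := k) _) _.
    by move=> Q; rewrite mem_filter => /andP[_ /card_Qs ->].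
  by rewrite size_filter leq_mul2l count_or_degree orbT.
have xU : x \in U by rewrite !inE eqxx.
have yU : y \in U by rewrite !inE eqxx orbT.
have U_le_half : #|U| <= n./2.
  have := odd_double_half n; rewrite od.
  have : k * (degree Qs x + degree Qs y) <= k * m by rewrite leq_mul2l ltnW ?orbT.
  lia.
have [c cU hx] := exists_extension_odd c0 od U_le_half xU.
exists c; split => //; first by rewrite !cU.
move=> Q QQs xyQ u uQ; apply: cU; rewrite !inE; apply/orP; right; apply/orP; right.
by apply: subsetP uQ; apply: sub_bigcup_seq; rewrite mem_filter xyQ.
Qed.

End LowDegreeColorings.

Lemma BM_lower_bound_even n k m (Qs : seq {set 'I_n}) :
  ~~ odd n -> 2 * (k * m) <= n -> is_m k.-1 m ->
  successful_BM k Qs -> n * m <= k * size Qs.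
Proof.
move=> ev hn hm [cardQ detQ]; rewrite leqNgt; apply/negP => hlt.
have [x degx] := exists_low_degree cardQ hlt.
have [col colE] : propertyB [set:: [seq Q :\ x | Q : {set 'I_n} <- Qs & x \in Q]].
  apply: (propertyB_of_lt_m hm) => [e|].
    rewrite inE => /mapP[Q]; rewrite mem_filter => /andP[xQ /cardQ kQ] ->.
    by move: (cardsD1 x Q); rewrite xQ kQ add1n => ->.
  by apply: leq_ltn_trans (card_set_seq_le _) _; rewrite size_map size_filter.
have [c ht cQ] := exists_balanced_coloring col cardQ ev hn degx.
have bQx Q : Q \in Qs -> x \in Q -> bichromatic c (Q :\ x).
  move=> QQs xQ; apply: (bichromatic_agree (col := col)).
    by move=> u /setD1P[_ uQ]; apply: cQ QQs xQ u uQ.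
  by apply: colE; rewrite inE; apply/mapP; exists Q; rewrite ?mem_filter ?xQ.
pose ans := map (answer_avoiding c [set x]) Qs.
have adm_c : all2 (admBM c) Qs ans.
  by rewrite all2_map_diag; apply/allP => Q _; apply: admBM_answer_avoiding.
apply: (not_determined_even (S := fun c' => all2 (admBM c') Qs ans) ev ht adm_c _ (detQ c _ adm_c)).
rewrite all2_map_diag; apply/allP => Q QQs.
exact: admBM_flip_answer_avoiding (set11 x) (bQx Q QQs).
Qed.

Lemma GM_lower_bound_odd n k m (Qs : seq {set 'I_n}) :
  odd n -> 5 + 2 * (k * m) <= n -> is_m k.-1 m ->
  successful_GM k Qs -> n.-1 * m <= 2 * (k * size Qs).
Proof.
move=> od hn hm [cardQ detQ]; rewrite leqNgt; apply/negP => hlt.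
have [x [y [xy degxy]]] := exists_two_low_degree cardQ hlt.
(* Merging y into x makes the extended colouring agree on x and y. *)
pose edges z := [seq merge x y @: (Q :\ z) | Q : {set 'I_n} <- Qs & z \in Q].
have [col colE] : propertyB [set:: edges x ++ edges y].
  apply: (propertyB_of_lt_m hm) => [e|]; last first.
    by apply: leq_ltn_trans (card_set_seq_le _) _; rewrite size_cat !size_map !size_filter.
  have card_edges z : (z == x) || (z == y) -> e \in edges z -> #|e| = k.-1.
    move=> zxy /mapP[Q]; rewrite mem_filter => /andP[zQ /cardQ kQ] ->.
    rewrite card_in_imset; last first.
      by apply: merge_inj_in; case/orP: zxy => /eqP->; rewrite setD11 ?orbT.
    by move: (cardsD1 z Q); rewrite zQ kQ add1n => ->.
  by rewrite inE mem_cat => /orP[]; apply: card_edges; rewrite eqxx ?orbT.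
have merge_yx : (col \o merge x y) y = (col \o merge x y) x.
  by rewrite /= /merge eqxx (negbTE xy).
have [c [hx cyx cQ]] := exists_odd_coloring cardQ od hn degxy merge_yx.
have bQz z Q : (z == x) || (z == y) -> Q \in Qs -> z \in Q -> bichromatic c (Q :\ z).
  move=> zxy QQs zQ.
  have xyQ : (x \in Q) || (y \in Q) by case/orP: zxy => /eqP <-; rewrite zQ ?orbT.
  apply: (bichromatic_imset (col := col) (g := merge x y)).
    by move=> u /setD1P[_ uQ]; rewrite (cQ Q QQs xyQ u uQ).
  apply: colE; rewrite inE mem_cat; apply/orP.
  case/orP: zxy => /eqP zx; subst z; [left | right];
    by apply/mapP; exists Q; rewrite ?mem_filter ?zQ.
pose ans := map (bichromatic c) Qs.
have adm_c : all2 (admGM c) Qs ans by rewrite all2_map_diag; apply/allP => Q _; apply: eqxx.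
have adm_flip z : (z == x) || (z == y) -> all2 (admGM (flip c z)) Qs ans.
  move=> zxy; rewrite all2_map_diag; apply/allP => Q QQs.
  by rewrite /admGM bichromatic_flip ?eqxx // => zQ; apply: bQz.
apply: (not_determined_odd (S := fun c' => all2 (admGM c') Qs ans) od xy hx cyx adm_c).
- by apply: adm_flip; rewrite eqxx.
- by apply: adm_flip; rewrite eqxx orbT.
- exact: detQ adm_c.
Qed.

Lemma BM_lower_bound_odd n k m (Qs : seq {set 'I_n}) :
  odd n -> 5 + 2 * (k * m) <= n -> is_m k.-2 m ->
  successful_BM k Qs -> n.-1 * m <= 2 * (k * size Qs).
Proof.
move=> od hn hm [cardQ detQ]; rewrite leqNgt; apply/negP => hlt.
have [x [y [xy degxy]]] := exists_two_low_degree cardQ hlt.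
pose X := [set x; y].
(* [Q :\: X] has k-1 or k-2 elements; trimming makes the edges uniform. *)
pose edge Q := take_set k.-2 (Q :\: X).
have [col colE] : propertyB
    [set:: [seq edge Q | Q : {set 'I_n} <- Qs & (x \in Q) || (y \in Q)]].
  apply: (propertyB_of_lt_m hm) => [e|]; last first.
    apply: leq_ltn_trans (card_set_seq_le _) _; rewrite size_map size_filter.
    exact: leq_ltn_trans (count_or_degree _ _ _) degxy.
  rewrite inE => /mapP[Q]; rewrite mem_filter => /andP[_ /cardQ kQ] ->.
  apply: card_take_set; rewrite cardsD kQ.
  have : #|Q :&: X| <= 2.
    by apply: leq_trans (subset_leq_card (subsetIr Q X)) _; rewrite cards2 xy.
  lia.
have merge_yx : (col \o merge x y) y = (col \o merge x y) x.
  by rewrite /= /merge eqxx (negbTE xy).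
have [c [hx cyx cQ]] := exists_odd_coloring cardQ od hn degxy merge_yx.
have bQX Q : Q \in Qs -> (x \in Q) || (y \in Q) -> bichromatic c (Q :\: X).
  move=> QQs xyQ; apply: bichromaticS (take_set_sub k.-2 _) _.
  apply: (bichromatic_agree (col := col)); last first.
    by apply: colE; rewrite inE; apply/mapP; exists Q; rewrite ?mem_filter ?xyQ.
  move=> u /(subsetP (take_set_sub _ _)); rewrite !inE negb_or => /andP[/andP[_ uy] uQ].
  by rewrite (cQ Q QQs xyQ u uQ) /= /merge (negbTE uy).
pose ans := map (answer_avoiding c X) Qs.
have adm_c : all2 (admBM c) Qs ans.
  by rewrite all2_map_diag; apply/allP => Q _; apply: admBM_answer_avoiding.
have adm_flip z : z \in X -> all2 (admBM (flip c z)) Qs ans.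
  move=> zX; rewrite all2_map_diag; apply/allP => Q QQs.
  apply: (admBM_flip_answer_avoiding zX) => zQ; apply: bQX => //.
  by move: zX; rewrite !inE => /orP[] /eqP <-; rewrite zQ ?orbT.
apply: (not_determined_odd (S := fun c' => all2 (admBM c') Qs ans) od xy hx cyx adm_c).
- by apply: adm_flip; rewrite !inE eqxx.
- by apply: adm_flip; rewrite !inE eqxx orbT.
- exact: detQ adm_c.
Qed.

Lemma is_m_unique j a b : is_m j a -> is_m j b -> a = b.
Proof.
move=> [[v [E [uE [nBE <-]]]] min_a] [[v' [E' [uE' [nBE' <-]]]] min_b].
by apply/eqP; rewrite eqn_leq min_a ?min_b.
Qed.

Lemma exists_is_m_value j : exists M, forall m, is_m j m -> m = M.
Proof.
case: (classic (exists m, is_m j m)) => [[M hM]|none].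
  by exists M => m hm; apply: is_m_unique hm hM.
by exists 0 => m hm; case: none; exists m.
Qed.

Local Open Scope ring_scope.

Lemma ler_nat_ratio (a b q d : nat) : (0 < d)%N -> (a * b <= d * q)%N ->
  a%:R / d%:R * b%:R <= q%:R :> rat.
Proof.
by move=> d_gt0 h; rewrite mulrAC ler_pdivrMr ?ltr0n // -!natrM ler_nat (mulnC q).
Qed.

Theorem theorem10 (k : nat) (hk : (3 <= k)%N) :
  exists n0 : nat, forall n : nat, (n0 <= n)%N ->
  forall (m1 m2 NB NG : nat),
    is_m k.-1 m1 -> is_m k.-2 m2 ->
    is_N_BM k n NB -> is_N_GM k n NG ->
    (~~ odd n -> f n k * m1%:R <= NB%:R :> rat /\ (NB <= NG)%N) /\
    (odd n -> f n k * m1%:R <= NG%:R :> rat /\ f n k * m2%:R <= NB%:R :> rat).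
Proof.
have [M1 hM1] := exists_is_m_value k.-1.
have [M2 hM2] := exists_is_m_value k.-2.
exists (5 + 2 * (k * M1 + k * M2))%N => n hn m1 m2 NB NG h1 h2 hB hG.
have eM1 := hM1 _ h1; have eM2 := hM2 _ h2; subst M1 M2.
have [[QB [succB <-]] minB] := hB; have [[QG [succG <-]] minG] := hG.
have k_gt0 : (0 < k)%N by lia.
split=> [ev | od].
  split; last by apply/minB/successful_GM_BM.
  rewrite /f ev; apply: ler_nat_ratio => //.
  by apply: BM_lower_bound_even ev _ h1 succB; lia.
have -> : f n k = n.-1%:R / (2 * k)%N%:R.
  by rewrite /f od /= -subn1 natrB ?natrM // odd_gt0.
split; apply: ler_nat_ratio; rewrite ?muln_gt0 // -mulnA.
  by apply: GM_lower_bound_odd od _ h1 succG; lia.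
by apply: BM_lower_bound_odd od _ h2 succB; lia.
Qed.
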